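(* Let $X\subseteq\Omega$ be club in $\Omega$ with $0\notin X$, $\Theta=\Theta_X$. Let $\alpha=\Omega\tilde\alpha>0$ (a nonzero multiple of $\Omega$), $\beta<\Omega$ and $\tau=\tau(\alpha)<\Omega$. If $\alpha+\beta\in\hat\varepsilon_{\Omega+1}\cap\mathrm{JUMP}(X)$ and $(\tau_n)_{n<\omega}$ is strictly increasing with supremum $\tau$, then $\big(\Theta(\alpha[\tau_n]+\Theta^*(\alpha+\beta))\big)_{n<\omega}$ is strictly increasing with supremum $\Theta(\alpha+\beta)$.
   Context: $\Omega$ is the first uncountable ordinal; $\varepsilon_{\Omega+1}$ the least $\varepsilon>\Omega$ with $\omega^\varepsilon=\varepsilon$. Every $0<\xi<\varepsilon_{\Omega+1}$ has a unique $\Omega$-normal form $\xi=\Omega^{\alpha}\beta+\gamma$ with $0<\beta<\Omega$, $\gamma<\Omega^{\alpha}$. $C(0)=\{0\}$, $C(\Omega^\alpha\beta+\gamma)=C(\alpha)\cup C(\gamma)\cup\{\beta\}$; $\xi^*=\max C(\xi)$. For $\theta<\Omega$: $0[\theta]=1[\theta]=0$; $(\Omega^\alpha\beta+\gamma)[\theta]=\Omega^\alpha\beta+\gamma[\theta]$ if $\gamma>0$; $(\Omega^\alpha\beta)[\theta]=\Omega^\alpha\theta$ if $\beta$ is a limit; $\Omega^{\alpha+1}[\theta]=\Omega^\alpha\theta$; $(\Omega^\alpha(\beta+1))[\theta]=\Omega^\alpha\beta+(\Omega^\alpha)[\theta]$ if $\beta>0$; $\Omega^\alpha[\theta]=\Omega^{\alpha[\theta]}$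 if $\alpha$ is a limit. $\tau(0)=0$, $\tau(\zeta+1)=1$, $\tau(\Omega^\alpha\beta+\gamma)=\tau(\gamma)$ if $\gamma>0$, $\tau(\Omega^\alpha\beta)=\beta$ if $\beta$ limit, $\tau(\Omega^\alpha(\beta+1))=\tau(\alpha)$ if $\alpha$ limit, $\tau(\Omega^{\alpha+1}(\beta+1))=\Omega$. $\Theta_X(\xi)$ is the least $\theta\in X$ with $\theta>\xi^*$ such that all $\zeta<\xi$ with $\zeta^*<\theta$ have $\Theta_X(\zeta)<\theta$. $\Omega_0=1$, $\Omega_{n+1}=\Omega^{\Omega_n}$, $\Theta_X(\varepsilon_{\Omega+1})=\sup_n\Theta_X(\Omega_n)$, $\hat\varepsilon_{\Omega+1}=\{\xi<\varepsilon_{\Omega+1}:\xi^*<\Theta_X(\varepsilon_{\Omega+1})\}$. $\mathrm{FIX}(X)$ is the set of $\xi$ with $(\xi[1])^*<\xi^*=\tau(\xi)=\Theta_X(\gamma)$ for some $\gamma>\xi$; $\mathrm{JUMP}(X)=\{0\}\cup\{\text{successors}\}\cup\mathrm{FIX}(X)$; $\Theta^*(\xi)=\Theta_X(\zeta)$ if $\xi=\zeta+1$, $\tau(\xi)$ if $\xi\in\mathrm{FIX}(X)$, and $0$ otherwise. *)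

From HB Require Import structures.
From mathcomp Require Import all_boot all_order.
From Stdlib Require Import ClassicalEpsilon.

Set Implicit Arguments.
Unset Strict Implicit.
Unset Printing Implicit Defensive.

Import Order.TTheory.
Local Open Scope order_scope.

(* The countable ordinals [0, Omega) are modelled by an abstract       *)
(* bottomed total order O that is isomorphic to omega_1: well-founded, *)
(* uncountable, with all proper initial segments countable.            *)

Definition is_omega1 {d : Order.disp_t} (O : bOrderType d) : Prop :=
  well_founded (fun x y : O => x < y) /\
  (forall f : O -> nat, ~ injective f) /\
  (forall x : O, exists f : O -> nat,
      forall y z : O, y < x -> z < x -> f y = f z -> y = z).

(* Omega-normal-form terms: TCons a b g stands for Omega^a * b + g. *)
Inductive oterm {d : Order.disp_t} (O : bOrderType d) : Type :=
| TZero : oterm O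
| TCons : oterm O -> O -> oterm O -> oterm O.
Arguments TZero {d O}.
Arguments TCons {d O} a b g.

Section Defs.
Context {d : Order.disp_t} {O : bOrderType d}.
Local Notation T := (oterm O).

Definition odec (P : Prop) : bool :=
  if excluded_middle_informative P then true else false.

Definition inhO : inhabited O := inhabits \bot.

Definition osucc (x : O) : O :=
  epsilon inhO (fun y => x < y /\ forall z, x < z -> y <= z).
Definition oone : O := osucc \bot.
Definition osuccP (b : O) : Prop := exists c, b = osucc c.
Definition opred (b : O) : O := epsilon inhO (fun c => b = osucc c).
Definition olimit (b : O) : Prop := \bot < b /\ ~ osuccP b.
(* ordinal addition a + b : the c with [a, c) order-isomorphic to [0, b) *)
Definition oadd (a b : O) : O :=
  epsilon inhO (fun c => exists f : O -> O,
    (forall x, x < b -> a <= f x /\ f x < c) /\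
    (forall x y, x < b -> y < b -> (x < y) = (f x < f y)) /\
    (forall z, a <= z -> z < c -> exists x, x < b /\ f x = z)).
Definition osup_is (f : nat -> O) (s : O) : Prop :=
  (forall n, f n <= s) /\ (forall u, (forall n, f n <= u) -> s <= u).
Definition club (X : O -> Prop) : Prop :=
  (forall x, exists y, X y /\ x < y) /\
  (forall l, \bot < l ->
     (forall x, x < l -> exists y, X y /\ x < y /\ y < l) -> X l).

Definition mono (a : T) (t : O) : T :=
  if t == \bot then TZero else TCons a t TZero.
Definition tone : T := TCons TZero oone TZero.

Fixpoint tlt (x y : T) {struct x} : Prop :=
  match x, y with
  | TZero, TZero => False
  | TZero, TCons _ _ _ => True
  | TCons _ _ _, TZero => False
  | TCons a b g, TCons a' b' g' =>
      tlt a a' \/ (a = a' /\ (b < b' \/ (b = b' /\ tlt g g')))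
  end.

Fixpoint twf (x : T) : Prop :=
  match x with
  | TZero => True
  | TCons a b g => twf a /\ twf g /\ \bot < b /\
      match g with TZero => True | TCons a' _ _ => tlt a' a end
  end.

Fixpoint star (x : T) : O :=
  match x with
  | TZero => \bot
  | TCons a b g => Order.max (star a) (Order.max b (star g))
  end.

Fixpoint tsucc (x : T) : T :=
  match x with
  | TZero => tone
  | TCons a b TZero =>
      match a with
      | TZero => TCons TZero (osucc b) TZero
      | _ => TCons a b tone
      end
  | TCons a b g => TCons a b (tsucc g)
  end.

Definition tsuccP (x : T) : Prop := exists z, twf z /\ x = tsucc z.
Definition tpred (x : T) : option T :=
  if odec (tsuccP x)
  then Some (epsilon (inhabits TZero) (fun z => twf z /\ x = tsucc z))
  else None.

Fixpoint tadd (x : T) (t : O) : T :=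
  match x with
  | TZero => mono TZero t
  | TCons a b TZero =>
      match a with
      | TZero => mono TZero (oadd b t)
      | _ => TCons a b (mono TZero t)
      end
  | TCons a b g => TCons a b (tadd g t)
  end.

Fixpoint fs (x : T) (th : O) : T :=
  match x with
  | TZero => TZero
  | TCons a b TZero =>
      (* pw = (Omega^a)[th] *)
      let pw := match a with
                | TZero => TZero
                | _ => match tpred a with
                       | Some a' => mono a' th
                       | None => TCons (fs a th) oone TZero
                       end
                end in
      if odec (olimit b) then mono a th
      else let c := opred b in
           if c == \bot then pw else TCons a c pw
  | TCons a b g => TCons a b (fs g th)
  end.

(* tau; None stands for the value Omega *)
Fixpoint tau (x : T) : option O :=
  match x with
  | TZero => Some \bot
  | TCons a b TZero =>
      if odec (olimit b) then Some b
      else match a with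
           | TZero => Some oone
           | _ => match tpred a with
                  | Some _ => None
                  | None => tau a
                  end
           end
  | TCons a b g => tau g
  end.

Fixpoint Omn (n : nat) : T :=
  match n with
  | 0 => tone
  | S k => TCons (Omn k) oone TZero
  end.

Fixpoint omega_multiple (x : T) : Prop :=
  match x with
  | TZero => True
  | TCons a _ g => a <> TZero /\ omega_multiple g
  end.

Definition ThetaSpec (X : O -> Prop) (F : T -> O) : Prop :=
  forall xi, twf xi ->
    let P := fun th => X th /\ star xi < th /\
               (forall z, twf z -> tlt z xi -> star z < th -> F z < th) in
    P (F xi) /\ (forall th, P th -> F xi <= th).

Definition Theta (X : O -> Prop) : T -> O :=
  epsilon (inhabits (fun _ => \bot)) (ThetaSpec X).

(* hat epsilon_{Omega+1} : xi^* < Theta(eps_{Omega+1}) = sup_n Theta(Omega_n) *)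
Definition hat (X : O -> Prop) (xi : T) : Prop :=
  exists s, osup_is (fun n => Theta X (Omn n)) s /\ star xi < s.

Definition FIX (X : O -> Prop) (xi : T) : Prop :=
  twf xi /\ star (fs xi oone) < star xi /\ tau xi = Some (star xi) /\
  exists g, twf g /\ tlt xi g /\ Theta X g = star xi.

Definition JUMP (X : O -> Prop) (xi : T) : Prop :=
  xi = TZero \/ tsuccP xi \/ FIX X xi.

Definition ThetaStar (X : O -> Prop) (xi : T) : O :=
  match tpred xi with
  | Some z => Theta X z
  | None => if odec (FIX X xi) then odflt \bot (tau xi) else \bot
  end.

End Defs.

From HB Require Import structures.
From mathcomp Require Import all_boot all_order.
From Stdlib Require Import ClassicalEpsilon Classical FunctionalExtensionality.

Set Implicit Arguments.
Unset Strict Implicit.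
Unset Printing Implicit Defensive.

Import Order.TTheory.
Local Open Scope order_scope.

(* Let [xi = alpha + beta] and [delta = Theta^*(xi)].  If [xi = z + 1] then
   [delta = Theta z], otherwise [xi] is in [FIX X] and [delta = xi^*]; either
   way [xi^* <= delta < Theta xi] and [Theta <= delta] on [[alpha, xi)].
   The terms [x_n = alpha[tau_n] + delta] increase, stay below [xi], are
   cofinal in [alpha], and satisfy [x_n^* <= delta <= x_(n+1)^*]; the upper
   bound needs [1 + delta = delta], as [delta >= tau] is infinite.  Hence
   [Theta x_n] increases, and its supremum is in the club [X], exceeds [xi^*],
   and bounds [Theta z] for every [z < xi] whose [z^*] lies below it (through
   some [x_n] if [z < alpha], through [delta] otherwise).  By minimality of
   [Theta xi], that supremum is [Theta xi]. *)

Lemma odecT (P : Prop) : P -> odec P = true.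
Proof. by rewrite /odec; case: excluded_middle_informative. Qed.

Lemma odecF (P : Prop) : ~ P -> odec P = false.
Proof. by rewrite /odec; case: excluded_middle_informative. Qed.

Section OrdinalNotation.
Context {d : Order.disp_t} {O : bOrderType d}.
Hypothesis omega1_O : is_omega1 O.

Lemma olt_wf : well_founded (fun x y : O => x < y).
Proof. by case: omega1_O. Qed.

Lemma ex_minimal (P : O -> Prop) x0 :
  P x0 -> exists m, P m /\ forall y, P y -> m <= y.
Proof.
elim/(well_founded_ind olt_wf): x0 => x IH Px.
case: (classic (exists y, P y /\ y < x)) => [[y [Py ltyx]]|no_lt]; first exact: IH Py.
exists x; split => // y Py; rewrite leNgt; apply/negP => ltyx.
by apply: no_lt; exists y.
Qed.

Lemma ex_ogt (x : O) : exists y, x < y.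
Proof.
have [_ [not_inj countable_below]] := omega1_O.
apply: NNPP => no_gt.
have ltx y : y != x -> y < x.
  by move=> neq; rewrite lt_neqAle neq leNgt; apply/negP => ltxy; apply: no_gt; exists y.
have [f inj_f] := countable_below x.
apply: (not_inj (fun y => if y == x then 0%N else (f y).+1)) => y z /=.
case: eqP => [->|/eqP nyx]; case: eqP => [->|/eqP nzx] //.
by move=> [] /inj_f; apply; apply: ltx.
Qed.

Lemma osucc_spec (x : O) : x < osucc x /\ forall z, x < z -> osucc x <= z.
Proof.
apply: (epsilon_spec inhO (fun y => x < y /\ forall z, x < z -> y <= z)).
have [y ltxy] := ex_ogt x.
have [m [ltxm min_m]] := ex_minimal (P := fun y => x < y) ltxy.
by exists m.
Qed.

Lemma osucc_gt (x : O) : x < osucc x.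
Proof. exact: (osucc_spec x).1. Qed.

Lemma osucc_min (x z : O) : x < z -> osucc x <= z.
Proof. exact: (osucc_spec x).2. Qed.

Lemma lt_osucc (x z : O) : (z < osucc x) = (z <= x).
Proof.
apply/idP/idP => [ltz|lezx]; last exact: le_lt_trans lezx (osucc_gt x).
by rewrite leNgt; apply/negP => /osucc_min; rewrite leNgt ltz.
Qed.

Lemma osucc_gt0 (x : O) : \bot < osucc x.
Proof. exact: le_lt_trans (le0x x) (osucc_gt x). Qed.

Lemma oone_gt0 : \bot < (oone : O).
Proof. exact: osucc_gt. Qed.

Lemma oone_le (x : O) : \bot < x -> oone <= x.
Proof. exact: osucc_min. Qed.

Lemma opredK (b : O) : \bot < b -> ~ olimit b -> osucc (opred b) = b.
Proof.
move=> gt0b not_limit; have succ_b : osuccP b by apply: NNPP => ?; apply: not_limit.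
by rewrite [RHS](epsilon_spec inhO (fun c => b = osucc c) succ_b).
Qed.

Lemma opred_lt (b : O) : \bot < b -> ~ olimit b -> opred b < b.
Proof. by move=> gt0b not_limit; rewrite -{2}(opredK gt0b not_limit) osucc_gt. Qed.

Lemma olimit_osucc (l c : O) : olimit l -> c < l -> osucc c < l.
Proof.
move=> [gt0l not_succ] ltcl; rewrite lt_neqAle osucc_min // andbT.
by apply/eqP => eq_l; apply: not_succ; exists c.
Qed.

Lemma oone_lt_olimit (l : O) : olimit l -> oone < l.
Proof. by move=> limit_l; apply: olimit_osucc => //; case: limit_l. Qed.

Lemma not_olimit_oone : ~ olimit (oone : O).
Proof. by move=> [_]; apply; exists \bot. Qed.

(* Countably many countable initial segments cannot cover [O]: code [y] by
   the index of a segment containing it and its position in that segment. *)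
Lemma ex_ogt_seq (f : nat -> O) : exists u, forall n, f n < u.
Proof.
apply: NNPP => unbounded.
have cover y : exists n, y < f n.
  have [y' ltyy'] := ex_ogt y.
  apply: NNPP => no_n; apply: unbounded; exists y' => n.
  by rewrite ltNge; apply/negP => le_fn; apply: no_n; exists n; apply: lt_le_trans le_fn.
have [_ [not_inj countable_below]] := omega1_O.
pose N y := epsilon (inhabits 0%N) (fun n => y < f n).
have ltN y : y < f (N y) := epsilon_spec _ _ (cover y).
pose code n := epsilon (inhabits (fun _ : O => 0%N))
  (fun c : O -> nat => forall y z, y < f n -> z < f n -> c y = c z -> y = z).
have code_inj n : forall y z, y < f n -> z < f n -> code n y = code n z -> y = z
  := epsilon_spec _ _ (countable_below (f n)).
apply: (not_inj (fun y => pickle (N y, code (N y) y))).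
move=> y z /(pcan_inj pickleK) [eN]; rewrite -eN => ecode.
by apply: (code_inj (N y)) => //; rewrite eN.
Qed.

Lemma ex_osup (f : nat -> O) : exists s, osup_is f s.
Proof.
have [u ltu] := ex_ogt_seq f.
have [|s [ub_s min_s]] := ex_minimal (P := fun u => forall n, f n <= u) (x0 := u).
  by move=> n; apply: ltW.
by exists s.
Qed.

Lemma osup_lt (f : nat -> O) s x : osup_is f s -> x < s -> exists n, x < f n.
Proof.
move=> [_ min_s] ltxs; apply: NNPP => no_n.
have : s <= x by apply: min_s => n; rewrite leNgt; apply/negP => ?; apply: no_n; exists n.
by rewrite leNgt ltxs.
Qed.

Lemma osup_gt_incr (f : nat -> O) s n :
  (forall n, f n < f n.+1) -> osup_is f s -> f n < s.
Proof. by move=> f_incr [ub_s _]; apply: lt_le_trans (f_incr n) (ub_s _). Qed.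

Lemma club_osup (X : O -> Prop) (f : nat -> O) s : club X ->
  (forall n, X (f n)) -> (forall n, f n < f n.+1) -> osup_is f s -> X s.
Proof.
move=> [_ closedX] Xf f_incr sup_s; apply: closedX.
  exact: le_lt_trans (le0x (f 0%N)) (osup_gt_incr 0 f_incr sup_s).
move=> x ltxs; have [n ltxf] := osup_lt sup_s ltxs.
by exists (f n); split; last split; last exact: osup_gt_incr.
Qed.

Lemma olimit_osup (f : nat -> O) s :
  (forall n, f n < f n.+1) -> osup_is f s -> olimit s.
Proof.
move=> f_incr sup_s; split.
  exact: le_lt_trans (le0x (f 0%N)) (osup_gt_incr 0 f_incr sup_s).
move=> [c eq_s]; have : forall n, f n <= c.
  by move=> n; rewrite -lt_osucc -eq_s; apply: osup_gt_incr.
by move/(proj2 sup_s); rewrite eq_s leNgt osucc_gt.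
Qed.

Definition oadd_iso (a b c : O) (f : O -> O) : Prop :=
  (forall x, x < b -> a <= f x /\ f x < c) /\
  (forall x y, x < b -> y < b -> (x < y) = (f x < f y)) /\
  (forall z, a <= z -> z < c -> exists x, x < b /\ f x = z).

Lemma oadd_iso_le_pointwise a b c c' f g :
  oadd_iso a b c f -> oadd_iso a b c' g ->
  forall x, x < b -> (forall y, y < x -> f y = g y) -> f x <= g x.
Proof.
move=> [f_in [f_mono f_onto]] [g_in [g_mono _]] x ltxb IH.
rewrite leNgt; apply/negP => ltgf.
have [y [ltyb eq_fy]] := f_onto (g x) (g_in x ltxb).1 (lt_trans ltgf (f_in x ltxb).2).
have ltyx : y < x by rewrite (f_mono y x ltyb ltxb) eq_fy.
by move: (ltyx); rewrite (g_mono y x ltyb ltxb) -(IH y ltyx) eq_fy ltxx.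
Qed.

Lemma oadd_iso_eq a b c c' f g : oadd_iso a b c f -> oadd_iso a b c' g ->
  forall x, x < b -> f x = g x.
Proof.
move=> iso_f iso_g; elim/(well_founded_ind olt_wf) => x IH ltxb.
apply: le_anti; rewrite (oadd_iso_le_pointwise iso_f iso_g) //=.
  by apply: (oadd_iso_le_pointwise iso_g iso_f) => // y ltyx; rewrite IH // (lt_trans ltyx).
by move=> y ltyx; rewrite IH // (lt_trans ltyx).
Qed.

Lemma oadd_iso_le a b c c' f g : \bot < b ->
  oadd_iso a b c f -> oadd_iso a b c' g -> c <= c'.
Proof.
move=> gt0b iso_f iso_g; rewrite leNgt; apply/negP => ltc'c.
have [g_in _] := iso_g; have [_ [_ f_onto]] := iso_f.
have [a_le_g0 g0_lt] := g_in _ gt0b.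
have [y [ltyb eq_fy]] := f_onto c' (le_trans a_le_g0 (ltW g0_lt)) ltc'c.
by move: (g_in y ltyb).2; rewrite -(oadd_iso_eq iso_f iso_g ltyb) eq_fy ltxx.
Qed.

Lemma oaddE a b c f : \bot < b -> oadd_iso a b c f -> oadd a b = c.
Proof.
move=> gt0b iso_f; have ex_iso : exists c f, oadd_iso a b c f by exists c, f.
have [g iso_g] := epsilon_spec inhO (fun c => exists f, oadd_iso a b c f) ex_iso.
by apply: le_anti; rewrite (oadd_iso_le gt0b iso_f iso_g) (oadd_iso_le gt0b iso_g iso_f).
Qed.

Definition ofinite (y : O) := forall l, olimit l -> y < l.

Lemma not_ofinite (y : O) : ~ ofinite y -> exists l, olimit l /\ l <= y.
Proof.
move=> infinite_y; apply: NNPP => no_l; apply: infinite_y => l limit_l.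
by rewrite ltNge; apply/negP => le_ly; apply: no_l; exists l.
Qed.

(* [1 + delta] is witnessed by the map that shifts the finite ordinals by one
   and fixes the infinite ones. *)
Definition oshift (y : O) := if odec (ofinite y) then osucc y else y.

Lemma oshift_lt (x y : O) : x < y -> oshift x < oshift y.
Proof.
rewrite /oshift => ltxy.
case: (classic (ofinite x)) => [fin_x|inf_x]; last first.
  have [l [limit_l le_lx]] := not_ofinite inf_x.
  have inf_y : ~ ofinite y by move=> /(_ l limit_l); rewrite ltNge (le_trans le_lx (ltW ltxy)).
  by rewrite !odecF.
rewrite odecT //; case: (classic (ofinite y)) => [fin_y|inf_y].
  by rewrite odecT // lt_osucc osucc_min.
have [l [limit_l le_ly]] := not_ofinite inf_y.
by rewrite odecF //; apply: lt_le_trans (olimit_osucc limit_l (fin_x l limit_l)) le_ly.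
Qed.

Lemma oshift_lt_infinite (l delta y : O) :
  olimit l -> l <= delta -> y < delta -> oshift y < delta.
Proof.
rewrite /oshift => limit_l le_ld ltyd; case: (classic (ofinite y)) => [fin_y|inf_y].
  by rewrite odecT //; apply: lt_le_trans (olimit_osucc limit_l (fin_y l limit_l)) le_ld.
by rewrite odecF.
Qed.

Lemma oshift_ge1 (y : O) : oone <= oshift y.
Proof.
rewrite /oshift; case: (classic (ofinite y)) => [fin_y|inf_y].
  by rewrite odecT // oone_le // osucc_gt0.
have [l [limit_l le_ly]] := not_ofinite inf_y.
by rewrite odecF //; apply: le_trans (ltW (oone_lt_olimit limit_l)) le_ly.
Qed.

Lemma oshift_onto (delta z : O) : oone <= z -> z < delta ->
  exists y, y < delta /\ oshift y = z.
Proof.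
move=> ge1z ltzd; rewrite /oshift; case: (classic (ofinite z)) => [fin_z|inf_z].
  have gt0z : \bot < z := lt_le_trans oone_gt0 ge1z.
  have not_limit_z : ~ olimit z by move=> /fin_z; rewrite ltxx.
  have ltpz := opred_lt gt0z not_limit_z.
  exists (opred z); split; first exact: lt_trans ltzd.
  by rewrite odecT ?opredK // => l /fin_z; apply: lt_trans.
by exists z; rewrite odecF.
Qed.

Lemma oadd_oone_infinite (l delta : O) : olimit l -> l <= delta ->
  oadd oone delta = delta.
Proof.
move=> limit_l le_ld; apply: (oaddE (f := oshift)).
  exact: lt_le_trans (proj1 limit_l) le_ld.
split; first by move=> y ltyd; rewrite oshift_ge1 (oshift_lt_infinite limit_l).
split; last by move=> z ge1z; apply: oshift_onto.
move=> x y _ _; apply/idP/idP; first exact: oshift_lt.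
by apply: contraTT; rewrite -!leNgt le_eqVlt => /orP [/eqP -> //|/oshift_lt/ltW].
Qed.

Local Notation T := (oterm O).

Lemma tlt_trans (y x z : T) : tlt x y -> tlt y z -> tlt x z.
Proof.
elim: x y z => [|a IHa b g IHg] [|a' b' g'] [|a'' b'' g''] //=.
case=> [lt_a|[<- lt_bg]] [lt_a'|[<- lt_bg']].
- by left; apply: IHa lt_a lt_a'.
- by left.
- by left.
right; split=> //; case: lt_bg lt_bg' => [lt_b|[<- lt_g]] [lt_b'|[<- lt_g']].
- by left; apply: lt_trans lt_b lt_b'.
- by left.
- by left.
- by right; split => //; apply: IHg lt_g lt_g'.
Qed.

Lemma tlt0 (x : T) : ~ tlt x TZero.
Proof. by case: x => [|a b g] []. Qed.

Lemma tlt0x (x : T) : x <> TZero -> tlt TZero x.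
Proof. by case: x. Qed.

Definition tle (x y : T) := x = y \/ tlt x y.

Lemma tlt_le_trans (y x z : T) : tlt x y -> tle y z -> tlt x z.
Proof. by move=> ltxy [<-|/(tlt_trans ltxy)]. Qed.

Lemma tle_trans (y x z : T) : tle x y -> tle y z -> tle x z.
Proof. by case=> [->|ltxy] // leyz; right; apply: tlt_le_trans leyz. Qed.

Lemma tlt_cons_exp (a a' : T) b b' g g' : tlt a a' -> tlt (TCons a b g) (TCons a' b' g').
Proof. by left. Qed.

Lemma tlt_cons_coef (a : T) b b' g g' : b < b' -> tlt (TCons a b g) (TCons a b' g').
Proof. by right; split=> //; left. Qed.

Lemma tlt_cons_tail (a : T) b g g' : tlt g g' -> tlt (TCons a b g) (TCons a b g').
Proof. by right; split=> //; right. Qed.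

Definition lead_lt (e x : T) : Prop :=
  match x with TZero => True | TCons a _ _ => tlt a e end.

Lemma mono_cases (a : T) (v : O) :
  (v = \bot /\ mono a v = TZero) \/ (\bot < v /\ mono a v = TCons a v TZero).
Proof.
rewrite /mono; case: eqP => [->|neq]; [by left | right; split => //].
by rewrite lt_neqAle le0x andbT eq_sym; apply/eqP.
Qed.

Lemma mono_bot (a : T) : mono a \bot = TZero.
Proof. by rewrite /mono eqxx. Qed.

Lemma mono_pos (a : T) (v : O) : \bot < v -> mono a v = TCons a v TZero.
Proof. by rewrite /mono lt_neqAle eq_sym => /andP [/negbTE ->]. Qed.

Lemma twf_mono (a : T) v : twf a -> twf (mono a v).
Proof. by case: (mono_cases a v) => [[_ ->]|[gt0v ->]]. Qed.

Definition twf_lt (z y : T) := twf z /\ twf y /\ tlt z y.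

Lemma acc_twf_lt0 : Acc twf_lt TZero.
Proof. by constructor => z [_ [_ /tlt0]]. Qed.

Lemma acc_twf_lt_cons (a : T) :
  (forall y, twf y -> lead_lt a y -> Acc twf_lt y) ->
  forall b g, twf (TCons a b g) -> Acc twf_lt (TCons a b g).
Proof.
move=> acc_below b; elim/(well_founded_ind olt_wf): b => b IHb g wf_abg.
have acc_g : Acc twf_lt g by apply: acc_below; case: wf_abg => _ [? [_ ?]].
elim: acc_g wf_abg => {}g _ IHg wf_abg.
constructor => -[|a' b' g'] [wf_z [_ lt_z]]; first exact: acc_twf_lt0.
case: lt_z => [lt_a|[ea [lt_b|[eb lt_g]]]]; first exact: acc_below.
  by rewrite ea; apply: IHb; rewrite -?ea.
rewrite ea eb in wf_z *; apply: IHg => //.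
by split; [case: wf_z => _ [] | split; [case: wf_abg => _ [] |]].
Qed.

Lemma acc_twf_lt_lead (a : T) : Acc twf_lt a -> twf a ->
  forall b g, twf (TCons a b g) -> Acc twf_lt (TCons a b g).
Proof.
elim=> {}a _ IH wf_a; apply: acc_twf_lt_cons => -[|a' b' g'] wf_y lead_y.
  exact: acc_twf_lt0.
have wf_a' : twf a' by case: wf_y.
by apply: (IH a') => //; split.
Qed.

Lemma twf_lt_wf : well_founded twf_lt.
Proof.
move=> x; case: (classic (twf x)) => [wf_x|not_wf]; last by constructor=> z [_ []].
elim: x wf_x => [|a IHa b g _] wf_x; first exact: acc_twf_lt0.
exact: acc_twf_lt_lead (IHa (proj1 wf_x)) (proj1 wf_x) _ _ wf_x.
Qed.

Fixpoint tcode (f : O -> nat) (x : T) : nat :=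
  match x with
  | TZero => 0%N
  | TCons a b g => (pickle (tcode f a, f b, tcode f g)).+1
  end.

Lemma tcode_inj (f : O -> nat) th :
  (forall y z, y < th -> z < th -> f y = f z -> y = z) ->
  forall x y : T, star x < th -> star y < th -> tcode f x = tcode f y -> x = y.
Proof.
move=> f_inj; elim=> [|a IHa b g IHg] [|a' b' g'] //=.
rewrite !gt_max => /and3P [lt_a lt_b lt_g] /and3P [lt_a' lt_b' lt_g'].
move=> [/(pcan_inj pickleK) [/IHa -> // /f_inj -> // /IHg -> //]].
Qed.

(* There are only countably many terms with coefficients below [th]. *)
Lemma ex_bound_small_terms (th : O) (G : T -> O) :
  exists u, forall z, twf z -> star z < th -> G z < u.
Proof.
have [_ [_ countable_below]] := omega1_O; have [f f_inj] := countable_below th.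
pose decode n := epsilon (inhabits TZero) (fun z => twf z /\ star z < th /\ tcode f z = n).
have [u ltu] := ex_ogt_seq (fun n => G (decode n)).
exists u => z wf_z lt_z.
have ex_z : exists z', twf z' /\ star z' < th /\ tcode f z' = tcode f z by exists z.
have [_ [lt_z' code_z']] := epsilon_spec (inhabits TZero) _ ex_z.
by rewrite -(tcode_inj f_inj lt_z' lt_z code_z'); apply: ltu.
Qed.

Lemma ex_club_closure (X : O -> Prop) (G : T -> O) (x0 : O) : club X ->
  exists th, X th /\ x0 < th /\ forall z, twf z -> star z < th -> G z < th.
Proof.
move=> clubX; have [unbounded _] := clubX.
have next th : exists y, X y /\ th < y /\ forall z, twf z -> star z < th -> G z < y.
  have [u ltu] := ex_bound_small_terms th G.
  have [y [Xy]] := unbounded (Order.max th u); rewrite gt_max => /andP [ltth ltu'].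
  by exists y; do 2!split=> //; move=> z wf_z lt_z; apply: lt_trans (ltu z wf_z lt_z) ltu'.
pose nx th := epsilon inhO
  (fun y => X y /\ th < y /\ forall z, twf z -> star z < th -> G z < y).
have nxP th := epsilon_spec inhO _ (next th).
have [y0 [Xy0 ltx0]] := unbounded x0.
pose f := fix f n := if n is k.+1 then nx (f k) else y0.
have f_incr n : f n < f n.+1 := (nxP (f n)).2.1.
have Xf n : X (f n) by case: n => [|n] //=; apply: (nxP _).1.
have [s sup_s] := ex_osup f.
exists s; split; first exact: club_osup clubX Xf f_incr sup_s.
split; first exact: lt_trans ltx0 (osup_gt_incr 0 f_incr sup_s).
move=> z wf_z lt_z; have [n lt_fn] := osup_lt sup_s lt_z.
exact: lt_trans ((nxP (f n)).2.2 z wf_z lt_fn) (osup_gt_incr n.+1 f_incr sup_s).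
Qed.

(* [Theta X] is defined by choice from [ThetaSpec]; a function meeting the
   specification is built by well-founded recursion on [twf_lt]. *)
Definition Theta_step (X : O -> Prop) (xi : T) (rec : forall z, twf_lt z xi -> O) : O :=
  let P th := X th /\ star xi < th /\
              forall z (lt_z : twf_lt z xi), star z < th -> rec z lt_z < th in
  epsilon inhO (fun th => P th /\ forall th', P th' -> th <= th').

Definition Theta_rec (X : O -> Prop) : T -> O :=
  Fix twf_lt_wf (fun _ => O) (Theta_step X).

Lemma Theta_recE X xi : Theta_rec X xi = @Theta_step X xi (fun y _ => Theta_rec X y).
Proof.
rewrite /Theta_rec Fix_eq // => x f g eq_fg.
by congr Theta_step; do 2!apply: functional_extensionality_dep => ?.
Qed.

Lemma ThetaSpec_Theta_rec (X : O -> Prop) : club X -> ThetaSpec X (Theta_rec X).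
Proof.
move=> clubX xi wf_xi P.
pose P' th := X th /\ star xi < th /\
  forall z (lt_z : twf_lt z xi), star z < th -> Theta_rec X z < th.
have PE th : P' th <-> P th.
  split=> -[Xth [lt_xi below]]; do 2!split=> //.
    by move=> z wf_z lt_z; apply: below.
  by move=> z [wf_z [_ lt_z]]; apply: below.
have ex_min : exists th, P' th /\ forall th', P' th' -> th <= th'.
  have [th0 [Xth0 [lt_th0 closed_th0]]] := ex_club_closure (Theta_rec X) (star xi) clubX.
  have P'th0 : P' th0 by do 2!split=> //; move=> z [wf_z _]; apply: closed_th0.
  by have [m [P'm min_m]] := ex_minimal P'th0; exists m.
have [P'm min_m] := epsilon_spec inhO _ ex_min.
rewrite Theta_recE; split; first exact/PE.
by move=> th /PE; apply: min_m.
Qed.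

Lemma ThetaSpec_Theta (X : O -> Prop) : club X -> ThetaSpec X (Theta X).
Proof.
move=> clubX; apply: (epsilon_spec (inhabits (fun _ => \bot)) (ThetaSpec X)).
by exists (Theta_rec X); apply: ThetaSpec_Theta_rec.
Qed.

Lemma star_cons_le (a : T) b g u :
  star a <= u -> b <= u -> star g <= u -> star (TCons a b g) <= u.
Proof. by move=> le_a le_b le_g /=; rewrite !ge_max le_a le_b le_g. Qed.

Lemma star_exp_le (a : T) b g : star a <= star (TCons a b g).
Proof. by rewrite /= le_max lexx. Qed.

Lemma star_coef_le (a : T) b g : b <= star (TCons a b g).
Proof. by rewrite /= !le_max lexx orbT. Qed.

Lemma star_tail_le (a : T) b g : star g <= star (TCons a b g).
Proof. by rewrite /= !le_max lexx !orbT. Qed.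

Lemma star_mono_le (a : T) v u : star a <= u -> v <= u -> star (mono a v) <= u.
Proof.
move=> le_a le_v; case: (mono_cases a v) => [[_ ->]|[_ ->]]; first exact: le0x.
by apply: star_cons_le => //; apply: le0x.
Qed.

Lemma star_mono0 v : star (mono (TZero : T) v) = v.
Proof.
case: (mono_cases (TZero : T) v) => [[-> ->] //|[_ ->]] /=.
by rewrite max_r ?max_l ?le0x.
Qed.

Lemma tpred_some (x z : T) : tpred x = Some z -> twf z /\ x = tsucc z.
Proof.
rewrite /tpred; case: (classic (tsuccP x)) => [succ_x|not_succ]; last by rewrite odecF.
by rewrite odecT // => -[<-]; apply: (epsilon_spec (inhabits TZero) _ succ_x).
Qed.

Lemma tpred_none (x : T) : tpred x = None -> ~ tsuccP x.
Proof. by rewrite /tpred => + succ_x; rewrite odecT. Qed.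

Definition limit_tau (x : T) (t : O) := twf x /\ tau x = Some t /\ olimit t.

Lemma fs_cons_tail (a : T) b g th :
  g <> TZero -> fs (TCons a b g) th = TCons a b (fs g th).
Proof. by case: g. Qed.

Lemma fs_limit (a : T) b th : olimit b -> fs (TCons a b TZero) th = mono a th.
Proof. by move=> limit_b /=; rewrite odecT. Qed.

Lemma fs_succ (a : T) b th : a <> TZero -> tpred a = None -> ~ olimit b ->
  fs (TCons a b TZero) th =
    if opred b == \bot then TCons (fs a th) oone TZero
    else TCons a (opred b) (TCons (fs a th) oone TZero).
Proof. by case: a => [//|a1 b1 g1] _ pred_a not_limit /=; rewrite odecF // pred_a. Qed.

Lemma limit_tau_ind (P : T -> O -> Prop) :
  (forall a b g t, g <> TZero -> limit_tau g t -> twf (TCons a b g) -> P g t ->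
     P (TCons a b g) t) ->
  (forall a b, twf (TCons a b TZero) -> olimit b -> P (TCons a b TZero) b) ->
  (forall a b t, twf (TCons a b TZero) -> a <> TZero -> limit_tau a t ->
     tpred a = None -> ~ olimit b -> osucc (opred b) = b -> P a t ->
     P (TCons a b TZero) t) ->
  forall x t, limit_tau x t -> P x t.
Proof.
move=> P_tail P_limit P_succ; elim=> [|a IHa b g IHg] t [wf_x [tau_x limit_t]].
  by case: tau_x limit_t => <- []; rewrite ltxx.
case: g IHg wf_x tau_x => [|a2 b2 g2] IHg wf_x tau_x; last first.
  have lim_g : limit_tau (TCons a2 b2 g2) t.
    by split; [case: wf_x => _ [] | split; [exact: tau_x|]].
  exact: P_tail (IHg _ lim_g).
move: tau_x => /=; case: (classic (olimit b)) => [limit_b|not_limit].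
  by rewrite odecT // => -[<-]; apply: P_limit.
rewrite odecF //; case: a IHa wf_x => [|a1 b1 g1] IHa wf_x.
  by move=> [eq_t]; rewrite -eq_t in limit_t; case: (not_olimit_oone limit_t).
case E: (tpred _) => [z|] // tau_a.
have lim_a : limit_tau (TCons a1 b1 g1) t by split; [case: wf_x | split].
apply: P_succ => //; last exact: IHa.
by apply: (opredK _ not_limit); case: wf_x => _ [_ []].
Qed.

Lemma tadd_cons (a : T) b g v :
  a <> TZero -> tadd (TCons a b g) v = TCons a b (tadd g v).
Proof. by case: a => // a1 b1 g1 _; case: g. Qed.

Lemma tadd_fin b v : tadd (TCons (TZero : T) b TZero) v = mono TZero (oadd b v).
Proof. by []. Qed.

Lemma tadd0x v : tadd (TZero : T) v = mono TZero v.
Proof. by []. Qed.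

Lemma twf_cons0 b (g : T) : twf (TCons TZero b g) -> g = TZero.
Proof. by case: g => // a' b' g' [_ [_ [_ /tlt0]]]. Qed.

Lemma twf_tadd (x : T) v : twf x ->
  twf (tadd x v) /\ forall e, e <> TZero -> lead_lt e x -> lead_lt e (tadd x v).
Proof.
elim: x => [|a _ b g IHg] wf_x.
  split=> [|e neq0 _]; first exact: twf_mono.
  by rewrite tadd0x; case: (mono_cases (TZero : T) v) => [[_ ->]|[_ ->]] //=; apply: tlt0x.
have [wf_a [wf_g [gt0b lead_g]]] := wf_x.
case: (classic (a = TZero)) => [eq_a|neq_a].
  move: wf_x; rewrite eq_a => /twf_cons0 ->; rewrite tadd_fin.
  split=> [|e _ lt0e]; first exact: twf_mono.
  by case: (mono_cases (TZero : T) (oadd b v)) => [[_ ->]|[_ ->]].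
have [wf_gv lead_gv] := IHg wf_g; rewrite tadd_cons //.
by split=> //; do 3!split=> //; apply: lead_gv.
Qed.

Lemma tadd_eq0 (x : T) v : omega_multiple x -> tadd x v = TZero -> x = TZero /\ v = \bot.
Proof.
case: x => [_|a b g [neq_a _]]; last by rewrite tadd_cons.
by rewrite tadd0x; case: (mono_cases (TZero : T) v) => [[-> _]|[_ ->]].
Qed.

Lemma star_tadd (x : T) v : omega_multiple x -> star (tadd x v) = Order.max (star x) v.
Proof.
elim: x => [|a _ b g IHg]; first by rewrite tadd0x star_mono0 /= max_r ?le0x.
by move=> [neq_a om_g]; rewrite tadd_cons //= IHg // !maxA.
Qed.

Lemma tadd_ge (x : T) v : omega_multiple x -> tle x (tadd x v).
Proof.
elim: x => [|a _ b g IHg].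
  by rewrite tadd0x; case: (mono_cases (TZero : T) v) => [[_ ->]|[_ ->]]; [left | right].
move=> [neq_a /IHg [eq_g|lt_g]]; rewrite tadd_cons //; first by left; rewrite -eq_g.
by right; apply: tlt_cons_tail.
Qed.

Lemma tadd_lt (x : T) v v' : omega_multiple x -> v < v' -> tlt (tadd x v) (tadd x v').
Proof.
move=> + ltv; elim: x => [|a _ b g IHg]; last first.
  by move=> [neq_a om_g]; rewrite !tadd_cons //; apply/tlt_cons_tail/IHg.
rewrite !tadd0x (mono_pos _ (le_lt_trans (le0x v) ltv)) => _.
by case: (mono_cases (TZero : T) v) => [[_ ->]|[_ ->]] //; apply: tlt_cons_coef.
Qed.

Lemma tlt_mono0 (a : T) v b g : a <> TZero -> tlt (mono TZero v) (TCons a b g).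
Proof.
by move=> neq_a; case: (mono_cases (TZero : T) v) => [[_ ->]|[_ ->]] //; left; apply: tlt0x.
Qed.

Lemma tlt_tadd_cons_exp (e e' : T) b b' g g' v :
  tlt e e' -> tlt (tadd (TCons e b g) v) (TCons e' b' g').
Proof.
move=> lt_e; case: (classic (e = TZero)) => [eq_e|neq_e]; last by rewrite tadd_cons //; left.
have neq_e' : e' <> TZero by move=> eq_e'; move: lt_e; rewrite eq_e'; apply: tlt0.
rewrite eq_e; case: g => [|a2 b2 g2]; first exact: tlt_mono0.
by left; apply: tlt0x.
Qed.

Lemma tsucc_cons (a : T) b g : a <> TZero -> tsucc (TCons a b g) = TCons a b (tsucc g).
Proof. by case: a => // a1 b1 g1 _; case: g. Qed.

Lemma tsucc_fin b : tsucc (TCons (TZero : T) b TZero) = TCons TZero (osucc b) TZero.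
Proof. by []. Qed.

Lemma tadd_tsucc (x z : T) v : omega_multiple x -> twf z -> tadd x v = tsucc z ->
  exists c, v = osucc c /\ z = tadd x c.
Proof.
elim: x z => [|a _ b g IHg] [|a' b' g'] om_x wf_z.
- rewrite tadd0x; case: (mono_cases (TZero : T) v) => [[_ ->] //|[_ ->] [eq_v]].
  by exists \bot; rewrite tadd0x mono_bot.
- rewrite tadd0x; case: (classic (a' = TZero)) => [eq_a'|neq_a'].
    move: wf_z; rewrite eq_a' => wf_z; rewrite (twf_cons0 wf_z) tsucc_fin.
    case: (mono_cases (TZero : T) v) => [[_ ->] //|[_ ->] [eq_v]].
    by exists b'; rewrite tadd0x mono_pos //; case: wf_z => _ [_ []].
  by rewrite tsucc_cons //; case: (mono_cases (TZero : T) v) => [[_ ->]|[_ ->] [/esym /neq_a']].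
- by case: om_x => neq_a _; rewrite tadd_cons // => -[/neq_a].
- case: om_x => neq_a om_g; rewrite tadd_cons //.
  case: (classic (a' = TZero)) => [eq_a'|neq_a'].
    by move: wf_z; rewrite eq_a' => /twf_cons0 ->; rewrite tsucc_fin => -[].
  have wf_g' : twf g' by case: wf_z => _ [].
  rewrite tsucc_cons // => -[<- <- /(IHg _ om_g wf_g') [c [-> ->]]].
  by exists c; rewrite tadd_cons.
Qed.

Lemma tadd_inv_lt (x z : T) v : omega_multiple x -> twf z -> ~ tlt z x ->
  tlt z (tadd x v) -> exists2 c, c < v & z = tadd x c.
Proof.
elim: x z => [|a _ b g IHg] z om_x wf_z not_lt.
  rewrite tadd0x; case: (mono_cases (TZero : T) v) => [[_ ->] /tlt0 //|[gt0v ->]].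
  case: z wf_z not_lt => [|a' b' g'] wf_z _ lt_z.
    by exists \bot; rewrite // tadd0x mono_bot.
  case: lt_z => [/tlt0 //|[eq_a' [ltb|[_ /tlt0 //]]]].
  move: wf_z; rewrite eq_a' => wf_z; rewrite (twf_cons0 wf_z).
  by exists b' => //; rewrite tadd0x mono_pos //; case: wf_z => _ [_ []].
case: om_x => neq_a om_g; rewrite tadd_cons //.
case: z wf_z not_lt => [|a' b' g'] wf_z not_lt; first by case: not_lt.
case=> [lt_a|[eq_a [lt_b|[eq_b lt_g]]]]; first by case: not_lt; left.
  by case: not_lt; right; split; last left.
rewrite eq_a eq_b in wf_z not_lt *.
have [|c ltc ->] := IHg g' om_g (proj1 (proj2 wf_z)) _ lt_g.
  by move=> lt_g'; apply: not_lt; apply: tlt_cons_tail.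
by exists c; rewrite // tadd_cons.
Qed.

Lemma star_fs_tadd_ge (x : T) v th : omega_multiple x -> \bot < v ->
  star x <= star (fs (tadd x v) th).
Proof.
elim: x => [|a _ b g IHg] om_x gt0v; first exact: le0x.
case: om_x => neq_a om_g; rewrite tadd_cons // fs_cons_tail; last first.
  by move/(tadd_eq0 om_g) => [_ eq_v]; move: gt0v; rewrite eq_v ltxx.
apply: star_cons_le; [exact: star_exp_le | exact: star_coef_le |].
exact: le_trans (IHg om_g gt0v) (star_tail_le _ _ _).
Qed.

Lemma fs_lt : forall x t, limit_tau x t -> forall th, th < t -> tlt (fs x th) x.
Proof.
apply: limit_tau_ind.
- by move=> a b g t neq_g _ _ IH th ltth; rewrite fs_cons_tail //; apply/tlt_cons_tail/IH.
- move=> a b _ limit_b th ltth; rewrite fs_limit //.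
  by case: (mono_cases a th) => [[_ ->] //|[_ ->]]; apply: tlt_cons_coef.
- move=> a b t wf_x neq_a _ pred_a not_limit eq_b IH th ltth; rewrite fs_succ //.
  case: eqP => _; first exact/tlt_cons_exp/IH.
  by apply: tlt_cons_coef; rewrite -{2}eq_b osucc_gt.
Qed.

Lemma twf_fs : forall x t, limit_tau x t -> forall th, th < t ->
  twf (fs x th) /\ forall e, lead_lt e x -> lead_lt e (fs x th).
Proof.
apply: limit_tau_ind.
- move=> a b g t neq_g _ [wf_a [_ [gt0b lead_g]]] IH th ltth.
  have [wf_g lead_fs] := IH th ltth; rewrite fs_cons_tail //.
  by split=> //; do 3!split=> //; apply: lead_fs.
- move=> a b [wf_a _] limit_b th ltth; rewrite fs_limit //.
  by case: (mono_cases a th) => [[_ ->]|[gt0th ->]].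
- move=> a b t [wf_a _] neq_a lim_a pred_a not_limit eq_b IH th ltth.
  have [wf_fs _] := IH th ltth; have lt_fs := fs_lt lim_a ltth.
  have wf_pow : twf (TCons (fs a th) oone TZero).
    by do 2!split=> //; split; [apply: oone_gt0 |].
  rewrite fs_succ //; case: eqP => [_|neq_pred].
    by split=> // e /= lt_a; apply: tlt_trans lt_fs lt_a.
  have gt0_pred : \bot < opred b by rewrite lt_neqAle le0x andbT eq_sym; apply/eqP.
  by split.
Qed.

Lemma fs_neq0 : forall x t, limit_tau x t -> forall th, \bot < th -> fs x th <> TZero.
Proof.
apply: limit_tau_ind.
- by move=> a b g t neq_g _ _ _ th _; rewrite fs_cons_tail.
- by move=> a b _ limit_b th gt0th; rewrite fs_limit // mono_pos.
- by move=> a b t _ neq_a _ pred_a not_limit _ _ th _; rewrite fs_succ //; case: eqP.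
Qed.

Lemma fs_lt_mono : forall x t, limit_tau x t ->
  forall th th', th < th' -> th' < t -> tlt (fs x th) (fs x th').
Proof.
apply: limit_tau_ind.
- move=> a b g t neq_g _ _ IH th th' ltth ltth'.
  by rewrite !fs_cons_tail //; apply/tlt_cons_tail/IH.
- move=> a b _ limit_b th th' ltth ltth'.
  rewrite !fs_limit // (mono_pos a (le_lt_trans (le0x th) ltth)).
  by case: (mono_cases a th) => [[_ ->] //|[_ ->]]; apply: tlt_cons_coef.
- move=> a b t _ neq_a _ pred_a not_limit _ IH th th' ltth ltth'.
  rewrite !fs_succ //; case: eqP => _; first exact/tlt_cons_exp/IH.
  exact/tlt_cons_tail/tlt_cons_exp/IH.
Qed.

Lemma fs_le_mono (x : T) t th th' : limit_tau x t -> th <= th' -> th' < t ->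
  tle (fs x th) (fs x th').
Proof.
move=> lim_x; rewrite le_eqVlt => /orP [/eqP ->|ltth] ltth'; first by left.
by right; exact: (fs_lt_mono lim_x ltth ltth').
Qed.

Lemma omega_multiple_fs : forall x t, limit_tau x t -> omega_multiple x ->
  forall th, \bot < th -> omega_multiple (fs x th).
Proof.
apply: limit_tau_ind.
- move=> a b g t neq_g _ _ IH [neq_a om_g] th gt0th.
  by rewrite fs_cons_tail //; split; last exact: IH.
- by move=> a b _ limit_b [neq_a _] th gt0th; rewrite fs_limit // mono_pos.
- move=> a b t _ neq_a lim_a pred_a not_limit _ _ _ th gt0th.
  by have := fs_neq0 lim_a gt0th; rewrite fs_succ //; case: eqP.
Qed.

Lemma tadd_fs_lt : forall x t, limit_tau x t -> omega_multiple x ->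
  forall th th' v, th < th' -> th' < t -> tlt (tadd (fs x th) v) (fs x th').
Proof.
apply: limit_tau_ind.
- move=> a b g t neq_g _ _ IH [neq_a om_g] th th' v ltth ltth'.
  by rewrite !fs_cons_tail // tadd_cons //; apply/tlt_cons_tail/IH.
- move=> a b _ limit_b [neq_a _] th th' v ltth ltth'.
  rewrite !fs_limit // (mono_pos a (le_lt_trans (le0x th) ltth)).
  case: (mono_cases a th) => [[_ ->]|[_ ->]]; first exact: tlt_mono0.
  by rewrite tadd_cons //; apply: tlt_cons_coef.
- move=> a b t _ neq_a lim_a pred_a not_limit _ _ _ th th' v ltth ltth'.
  have lt_pow := tlt_tadd_cons_exp oone oone TZero TZero v (fs_lt_mono lim_a ltth ltth').
  by rewrite !fs_succ //; case: eqP => // _; rewrite tadd_cons //; apply: tlt_cons_tail.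
Qed.

Lemma fs_succ_cofinal_same_exp (a : T) b t b' g' :
  a <> TZero -> tpred a = None -> ~ olimit b -> osucc (opred b) = b -> oone < t ->
  (forall z, twf z -> tlt z a -> exists2 th, th < t & tlt z (fs a th)) ->
  twf (TCons a b' g') -> b' < b ->
  exists2 th, th < t & tlt (TCons a b' g') (fs (TCons a b TZero) th).
Proof.
move=> neq_a pred_a not_limit eq_b one_lt IH wf_z lt_b.
have gt0b' : \bot < b' by case: wf_z => _ [_ []].
have le_pred : b' <= opred b by rewrite -lt_osucc eq_b.
have neq_pred : opred b != \bot by rewrite -lt0x (lt_le_trans gt0b').
have fsE th : fs (TCons a b TZero) th = TCons a (opred b) (TCons (fs a th) oone TZero).
  by rewrite fs_succ // (negbTE neq_pred).
move: le_pred; rewrite le_eqVlt => /orP [/eqP eq_b'|lt_b']; last first.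
  by exists oone; rewrite // fsE; apply: tlt_cons_coef.
rewrite {}eq_b' in wf_z *; case: g' wf_z => [|a'' b'' g''] wf_z.
  by exists oone; rewrite // fsE; apply: tlt_cons_tail.
have [wf_a'' lt_a''] : twf a'' /\ tlt a'' a by case: wf_z => _ [[? _] [_ ?]].
have [th ltth lt_fs] := IH a'' wf_a'' lt_a''.
by exists th; rewrite // fsE; apply/tlt_cons_tail/tlt_cons_exp.
Qed.

Lemma fs_cofinal : forall x t, limit_tau x t ->
  forall z, twf z -> tlt z x -> exists2 th, th < t & tlt z (fs x th).
Proof.
apply: limit_tau_ind.
- move=> a b g t neq_g lim_g _ IH [|a' b' g'] wf_z lt_z.
    by exists oone; [apply: oone_lt_olimit; case: lim_g => _ [] | rewrite fs_cons_tail].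
  have one_lt : oone < t by apply: oone_lt_olimit; case: lim_g => _ [].
  case: lt_z => [lt_a|[-> [lt_b|[-> lt_g]]]].
  + by exists oone; rewrite // fs_cons_tail //; apply: tlt_cons_exp.
  + by exists oone; rewrite // fs_cons_tail //; apply: tlt_cons_coef.
  + have [th ltth lt_fs] := IH g' (proj1 (proj2 wf_z)) lt_g.
    by exists th; rewrite // fs_cons_tail //; apply: tlt_cons_tail.
- move=> a b _ limit_b z wf_z lt_z.
  have pos_fs th : \bot < th -> fs (TCons a b TZero) th = TCons a th TZero.
    by move=> gt0th; rewrite fs_limit // mono_pos.
  case: z wf_z lt_z => [|a' b' g'] wf_z.
    by exists oone; rewrite ?oone_lt_olimit // pos_fs // oone_gt0.
  case=> [lt_a|[-> [lt_b|[_ /tlt0 //]]]].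
    by exists oone; rewrite ?oone_lt_olimit // pos_fs ?oone_gt0 //; apply: tlt_cons_exp.
  exists (osucc b'); first exact: olimit_osucc.
  by rewrite pos_fs ?osucc_gt0 //; apply/tlt_cons_coef/osucc_gt.
- move=> a b t wf_x neq_a lim_a pred_a not_limit eq_b IH z wf_z lt_z.
  have one_lt : oone < t by apply: oone_lt_olimit; case: lim_a => _ [].
  case: z wf_z lt_z => [|a' b' g'] wf_z.
    by exists oone; rewrite // fs_succ //; case: eqP.
  case=> [lt_a|[eq_a [lt_b|[_ /tlt0 //]]]]; last first.
    by subst a'; apply: fs_succ_cofinal_same_exp.
  have [th ltth lt_fs] := IH a' (proj1 wf_z) lt_a.
  by exists th; rewrite // fs_succ //; case: eqP => _; apply: tlt_cons_exp.
Qed.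

Lemma tau_le_star (x : T) t : twf x -> tau x = Some t -> t <= star x.
Proof.
elim: x t => [|a IHa b g IHg] t wf_x; first by move=> [<-].
case: g IHg wf_x => [|a2 b2 g2] IHg wf_x; last first.
  by move=> tau_g; apply: le_trans (star_tail_le _ _ _); apply: IHg tau_g; case: wf_x => _ [].
rewrite [tau _]/=; case: (classic (olimit b)) => [limit_b|not_limit].
  by rewrite odecT // => -[<-]; apply: star_coef_le.
rewrite odecF //; case: a IHa wf_x => [|a1 b1 g1] IHa wf_x.
  by move=> [<-]; apply: le_trans (star_coef_le _ _ _); apply: oone_le; case: wf_x => _ [_ []].
case: (tpred _) => // tau_a; apply: le_trans (star_exp_le _ _ _).
by apply: IHa tau_a; case: wf_x.
Qed.

Lemma star_fs_le : forall x t, limit_tau x t ->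
  forall th u, star x <= u -> th <= u -> star (fs x th) <= u.
Proof.
apply: limit_tau_ind.
- move=> a b g t neq_g _ _ IH th u le_x le_th; rewrite fs_cons_tail //.
  apply: star_cons_le (IH _ _ (le_trans (star_tail_le a b g) le_x) le_th).
    exact: le_trans (star_exp_le a b g) le_x.
  exact: le_trans (star_coef_le a b g) le_x.
- move=> a b _ limit_b th u le_x le_th; rewrite fs_limit //.
  exact: star_mono_le (le_trans (star_exp_le a b TZero) le_x) le_th.
- move=> a b t _ neq_a _ pred_a not_limit eq_b IH th u le_x le_th.
  have le_a := le_trans (star_exp_le a b TZero) le_x.
  have le_b := le_trans (star_coef_le a b TZero) le_x.
  have le_one : oone <= u by apply: le_trans le_b; rewrite oone_le // -eq_b osucc_gt0.
  have le_pow : star (TCons (fs a th) oone TZero) <= u.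
    by apply: star_cons_le => //; [apply: IH | apply: le0x].
  rewrite fs_succ //; case: eqP => // _; apply: star_cons_le => //.
  by apply: le_trans le_b; rewrite -{2}eq_b ltW // osucc_gt.
Qed.

Lemma star_tadd_pow_le (e : T) v u : star e <= u -> oone <= u -> v <= u ->
  oadd oone v <= u -> star (tadd (TCons e oone TZero) v) <= u.
Proof.
move=> le_e le_one le_v le_add; case: (classic (e = TZero)) => [->|neq_e].
  by rewrite tadd_fin star_mono0.
by rewrite tadd_cons //; apply: star_cons_le => //; rewrite /tadd star_mono0.
Qed.

(* The only finite coefficient [fs x th] can end with is [oone], whence the
   side condition on [oadd oone v]. *)
Lemma star_tadd_fs_le : forall x t, limit_tau x t -> omega_multiple x ->
  forall th v u, star x <= u -> th <= u -> v <= u -> oadd oone v <= u ->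
  star (tadd (fs x th) v) <= u.
Proof.
apply: limit_tau_ind.
- move=> a b g t neq_g lim_g _ IH [neq_a om_g] th v u le_x le_th le_v le_add.
  rewrite fs_cons_tail // tadd_cons //.
  apply: star_cons_le (IH om_g _ _ _ (le_trans (star_tail_le a b g) le_x) le_th le_v le_add).
    exact: le_trans (star_exp_le a b g) le_x.
  exact: le_trans (star_coef_le a b g) le_x.
- move=> a b _ limit_b [neq_a _] th v u le_x le_th le_v _.
  have om_mono : omega_multiple (mono a th).
    by case: (mono_cases a th) => [[_ ->]|[_ ->]].
  rewrite fs_limit // star_tadd // ge_max le_v andbT.
  exact: star_mono_le (le_trans (star_exp_le a b TZero) le_x) le_th.
- move=> a b t _ neq_a lim_a pred_a not_limit eq_b _ _ th v u le_x le_th le_v le_add.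
  have le_a := le_trans (star_exp_le a b TZero) le_x.
  have le_b := le_trans (star_coef_le a b TZero) le_x.
  have le_one : oone <= u by apply: le_trans le_b; rewrite oone_le // -eq_b osucc_gt0.
  have le_pow : star (tadd (TCons (fs a th) oone TZero) v) <= u.
    by apply: star_tadd_pow_le => //; apply: star_fs_le lim_a _ _ le_a le_th.
  rewrite fs_succ //; case: eqP => // _; rewrite tadd_cons //.
  apply: star_cons_le => //; apply: le_trans le_b.
  by rewrite -{2}eq_b ltW // osucc_gt.
Qed.

End OrdinalNotation.

Section Theta.
Context {d : Order.disp_t} {O : bOrderType d}.
Local Notation T := (oterm O).
Variable X : O -> Prop.
Hypotheses (omega1_O : is_omega1 O) (clubX : club X).

Lemma Theta_in (z : T) : twf z -> X (Theta X z).
Proof. by move=> wf_z; have [[] ] := ThetaSpec_Theta omega1_O clubX wf_z. Qed.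

Lemma star_lt_Theta (z : T) : twf z -> star z < Theta X z.
Proof. by move=> wf_z; have [[_ []] ] := ThetaSpec_Theta omega1_O clubX wf_z. Qed.

Lemma Theta_lt (z w : T) : twf z -> twf w -> tlt z w -> star z < Theta X w ->
  Theta X z < Theta X w.
Proof.
move=> wf_z wf_w; have [[_ [_ below]] _] := ThetaSpec_Theta omega1_O clubX wf_w.
exact: below.
Qed.

Lemma Theta_le (w : T) th : twf w -> X th -> star w < th ->
  (forall z, twf z -> tlt z w -> star z < th -> Theta X z < th) -> Theta X w <= th.
Proof.
move=> wf_w Xth lt_w closed_th; have [_ min_Theta] := ThetaSpec_Theta omega1_O clubX wf_w.
by apply: min_Theta.
Qed.

Lemma Theta_seq_osup (xi : T) (x : nat -> T) :
  twf xi -> (forall n, twf (x n)) ->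
  (forall n, tlt (x n) (x n.+1)) -> (forall n, tlt (x n) xi) ->
  (forall n, star (x n) < Theta X (x n.+1)) -> (forall n, star (x n) < Theta X xi) ->
  (exists n, star xi < Theta X (x n)) ->
  (forall z, twf z -> tlt z xi ->
     (exists n, tlt z (x n)) \/ (exists n, Theta X z < Theta X (x n))) ->
  (forall n, Theta X (x n) < Theta X (x n.+1)) /\
  osup_is (fun n => Theta X (x n)) (Theta X xi).
Proof.
move=> wf_xi wf_x x_incr lt_x star_x_lt star_x_lt_xi [n0 lt_xi] x_cofinal.
have s_incr n : Theta X (x n) < Theta X (x n.+1) by apply: Theta_lt.
split=> //; have [sig sup_sig] := ex_osup omega1_O (fun n => Theta X (x n)).
have le_sig n : Theta X (x n) <= sig := proj1 sup_sig n.
have le_xi_sig : Theta X xi <= sig.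
  apply: Theta_le => //.
  - exact: club_osup clubX (fun n => Theta_in (wf_x n)) s_incr sup_sig.
  - exact: lt_le_trans lt_xi (le_sig n0).
  move=> z wf_z lt_z lt_sig.
  have [[m lt_zm]|[n lt_Theta]] := x_cofinal z wf_z lt_z; last first.
    exact: lt_le_trans lt_Theta (le_sig n).
  have [k lt_zk] := osup_lt sup_sig lt_sig.
  have [ltmK ltkK] : (m < (m + k).+1 /\ k < (m + k).+1)%N.
    by rewrite !ltnS leq_addr leq_addl.
  apply: lt_le_trans (le_sig (m + k).+1); apply: Theta_lt => //.
    exact: tlt_trans lt_zm (homo_ltn tlt_trans x_incr ltmK).
  exact: lt_trans lt_zk (homo_ltn lt_trans s_incr ltkK).
split=> [n|u ub_u]; first exact/ltW/Theta_lt.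
exact: le_trans le_xi_sig (proj2 sup_sig u ub_u).
Qed.

Definition jump_gap (alpha xi : T) (delta : O) : Prop :=
  [/\ star xi <= delta, delta < Theta X xi &
      forall w, twf w -> ~ tlt w alpha -> tlt w xi -> Theta X w <= delta].

Lemma jump_gap_tsucc (alpha z : T) beta : omega_multiple alpha -> twf alpha -> twf z ->
  tadd alpha beta = tsucc z -> jump_gap alpha (tadd alpha beta) (Theta X z).
Proof.
move=> om_alpha wf_alpha wf_z eq_xi.
have [c [eq_beta eq_z]] := tadd_tsucc om_alpha wf_z eq_xi.
have wf_xi := proj1 (twf_tadd beta wf_alpha).
have : star (tadd alpha c) < Theta X z by rewrite -eq_z; apply: star_lt_Theta.
rewrite star_tadd // gt_max => /andP [lt_alpha lt_c].
split.
- by rewrite star_tadd // ge_max eq_beta (ltW lt_alpha) (osucc_min omega1_O).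
- apply: Theta_lt => //; first by rewrite eq_z eq_beta; apply/tadd_lt/(osucc_gt omega1_O).
  rewrite eq_z star_tadd //; apply: le_lt_trans (star_lt_Theta wf_xi).
  by rewrite star_tadd // eq_beta le_max2 ?lexx // ltW // (osucc_gt omega1_O).
move=> w wf_w not_lt lt_w; have [g ltg eq_w] := tadd_inv_lt om_alpha wf_w not_lt lt_w.
move: ltg; rewrite eq_beta (lt_osucc omega1_O) le_eqVlt => /orP [/eqP eq_g|lt_gc].
  by rewrite eq_w eq_z eq_g.
apply/ltW/Theta_lt => //; first by rewrite eq_w eq_z; apply: tadd_lt.
by rewrite eq_w star_tadd // gt_max lt_alpha (lt_trans lt_gc).
Qed.

Lemma jump_gap_FIX (alpha : T) beta : omega_multiple alpha -> twf alpha ->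
  FIX X (tadd alpha beta) -> jump_gap alpha (tadd alpha beta) (star (tadd alpha beta)).
Proof.
move=> om_alpha wf_alpha [wf_xi [lt_fs [_ [g [wf_g [lt_g eq_Theta]]]]]].
split; [by [] | exact: star_lt_Theta |].
move=> w wf_w not_lt lt_w; have [c ltc eq_w] := tadd_inv_lt om_alpha wf_w not_lt lt_w.
have gt0beta : \bot < beta := le_lt_trans (le0x c) ltc.
have lt_alpha := le_lt_trans (star_fs_tadd_ge oone om_alpha gt0beta) lt_fs.
rewrite -eq_Theta; apply/ltW/Theta_lt => //; first exact: tlt_trans lt_w lt_g.
rewrite eq_Theta eq_w star_tadd // gt_max lt_alpha.
by apply: lt_le_trans ltc _; rewrite star_tadd // le_max lexx orbT.
Qed.

Lemma jump_gap_ThetaStar (alpha : T) beta : omega_multiple alpha -> alpha <> TZero ->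
  twf alpha -> JUMP X (tadd alpha beta) ->
  jump_gap alpha (tadd alpha beta) (ThetaStar X (tadd alpha beta)).
Proof.
move=> om_alpha neq_alpha wf_alpha jump_xi; rewrite /ThetaStar.
case E: (tpred _) => [z|].
  by have [wf_z eq_xi] := tpred_some E; apply: jump_gap_tsucc.
have FIX_xi : FIX X (tadd alpha beta).
  case: jump_xi => [/(tadd_eq0 om_alpha) [] //|[/(tpred_none E) //|//]].
have [_ [_ [tau_xi _]]] := FIX_xi.
by rewrite odecT // tau_xi; apply: jump_gap_FIX.
Qed.

Section ShiftedFundamentalSequence.
Variables (alpha : T) (beta t delta : O) (tn : nat -> O).
Hypotheses (lim_alpha : limit_tau alpha t) (om_alpha : omega_multiple alpha)
  (tn_incr : forall n, tn n < tn n.+1) (tn_sup : osup_is tn t)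
  (gap_delta : jump_gap alpha (tadd alpha beta) delta).

Local Notation x n := (tadd (fs alpha (tn n)) delta).

Let tn_lt n : tn n < t.
Proof. exact: osup_gt_incr. Qed.

Let om_fs n : omega_multiple (fs alpha (tn n.+1)).
Proof. exact: omega_multiple_fs lim_alpha om_alpha _ (le_lt_trans (le0x _) (tn_incr n)). Qed.

Let le_alpha_delta : star alpha <= delta.
Proof. by case: gap_delta => + _ _; apply: le_trans; rewrite star_tadd // le_max lexx. Qed.

Lemma twf_shifted_fs n : twf (x n).
Proof. exact: (twf_tadd delta (twf_fs omega1_O lim_alpha (tn_lt n)).1).1. Qed.

Lemma shifted_fs_lt_fs n : tlt (x n) (fs alpha (tn n.+1)).
Proof. exact: (tadd_fs_lt lim_alpha om_alpha delta (tn_incr n) (tn_lt n.+1)). Qed.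

Lemma shifted_fs_incr n : tlt (x n) (x n.+1).
Proof. exact: tlt_le_trans (shifted_fs_lt_fs n) (tadd_ge delta (om_fs n)). Qed.

Lemma shifted_fs_lt_tadd n : tlt (x n) (tadd alpha beta).
Proof.
apply: tlt_trans (shifted_fs_lt_fs n) _.
exact: tlt_le_trans (fs_lt omega1_O lim_alpha (tn_lt n.+1)) (tadd_ge beta om_alpha).
Qed.

Lemma star_shifted_fs_le n : star (x n) <= delta.
Proof.
have le_t_delta : t <= delta.
  by apply: le_trans le_alpha_delta; case: lim_alpha => wf_alpha [/tau_le_star ->].
have le_tn : tn n <= delta := ltW (lt_le_trans (tn_lt n) le_t_delta).
have le_add : oadd oone delta <= delta.
  by rewrite (oadd_oone_infinite omega1_O (proj2 (proj2 lim_alpha)) le_t_delta).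
exact: (star_tadd_fs_le omega1_O lim_alpha om_alpha le_alpha_delta le_tn (lexx delta) le_add).
Qed.

Lemma delta_lt_Theta_shifted_fs n : delta < Theta X (x n.+1).
Proof.
apply: le_lt_trans (star_lt_Theta (twf_shifted_fs n.+1)).
by rewrite star_tadd // le_max lexx orbT.
Qed.

Lemma shifted_fs_cofinal z : twf z -> tlt z alpha -> exists n, tlt z (x n).
Proof.
move=> wf_z lt_z; have [th ltth lt_fs] := fs_cofinal omega1_O lim_alpha wf_z lt_z.
have [m lt_th_m] : exists m, th < tn m by apply: osup_lt tn_sup ltth.
exists m.+1; apply: tlt_le_trans lt_fs (tle_trans _ (tadd_ge delta (om_fs m))).
exact: (fs_le_mono lim_alpha (ltW (lt_trans lt_th_m (tn_incr m))) (tn_lt m.+1)).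
Qed.

Lemma Theta_shifted_fs_osup :
  (forall n, Theta X (x n) < Theta X (x n.+1)) /\
  osup_is (fun n => Theta X (x n)) (Theta X (tadd alpha beta)).
Proof.
have [le_xi_delta lt_delta gap] := gap_delta.
have wf_xi := proj1 (twf_tadd beta (proj1 lim_alpha)).
have star_lt n := le_lt_trans (star_shifted_fs_le n).
apply: Theta_seq_osup => //.
- exact: twf_shifted_fs.
- exact: shifted_fs_incr.
- exact: shifted_fs_lt_tadd.
- by move=> n; apply/star_lt/delta_lt_Theta_shifted_fs.
- by move=> n; apply: star_lt.
- by exists 1%N; apply: le_lt_trans le_xi_delta (delta_lt_Theta_shifted_fs 0).
move=> z wf_z lt_z; case: (classic (tlt z alpha)) => [lt_alpha|not_lt].
  by left; apply: shifted_fs_cofinal.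
right; exists 1%N.
exact: le_lt_trans (gap z wf_z not_lt lt_z) (delta_lt_Theta_shifted_fs 0).
Qed.

End ShiftedFundamentalSequence.

End Theta.

Theorem lemma4p6 (d : Order.disp_t) (O : bOrderType d) (X : O -> Prop)
  (alpha : oterm O) (beta t : O) (tn : nat -> O) :
  is_omega1 O -> club X -> ~ X \bot ->
  twf alpha -> alpha <> TZero -> omega_multiple alpha ->
  tau alpha = Some t ->
  hat X (tadd alpha beta) -> JUMP X (tadd alpha beta) ->
  (forall n, tn n < tn n.+1) -> osup_is tn t ->
  let s := fun n => Theta X (tadd (fs alpha (tn n)) (ThetaStar X (tadd alpha beta))) in
  (forall n, s n < s n.+1) /\ osup_is s (Theta X (tadd alpha beta)).
Proof.
move=> omega1_O clubX _ wf_alpha neq_alpha om_alpha tau_alpha _ jump_xi tn_incr tn_sup s.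
have lim_alpha : limit_tau alpha t.
  by do 2!split=> //; exact: (olimit_osup omega1_O tn_incr tn_sup).
apply: (Theta_shifted_fs_osup omega1_O clubX lim_alpha om_alpha tn_incr tn_sup).
exact: (jump_gap_ThetaStar omega1_O clubX om_alpha neq_alpha wf_alpha jump_xi).
Qed.
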